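(* Let $\alpha_1,\alpha_2\ge 0$ with $\alpha_1+\alpha_2=1$, $T>0$, $V\ge 0$. For problem (P1) below, the optimal UAV trajectory $x^*$ satisfies $x^*(t)\in[-D/2,D/2]$ for all $t\in[0,T]$, i.e. the UAV stays above the line segment between the two ground users. Problem (P1): maximize $r$ over $(r,r_1,r_2,x,p_1,p_2)$ subject to $r_k\ge\alpha_k r$ for $k=1,2$; $(r_1,r_2)\in\mathcal{C}(x,p)$; $p_1(t)+p_2(t)\le\bar P$ and $p_k(t)\ge 0$ for all $t\in[0,T]$; $|\dot x(t)|\le V$ for all $t\in[0,T]$.
   Context: Fix $D>0$, $H>0$, $\beta_0>0$, $\bar P>0$. Ground users GU 1, GU 2 are at horizontal positions $x_1=-D/2$, $x_2=D/2$; for UAV position $x\in\mathbb{R}$ (constant altitude $H$), $h_k(x)=\beta_0/((x-x_k)^2+H^2)$. A trajectory is a function $x:[0,T]\to\mathbb{R}$ ($V$-Lipschitz under the speed constraint), and a power allocation is a pair of measurable functions $p_1,p_2:[0,T]\to[0,\infty)$. $\mathcal{C}(x,p)$ is the set of $(r_1,r_2)$, $r_1,r_2\ge0$, with $r_1\le\frac1T\int_0^T\log_2(1+p_1(t)h_1(x(t)))dt$, $r_2\le\frac1T\int_0^T\log_2(1+p_2(t)h_2(x(t)))dt$, $r_1+r_2\le\frac1T\int_0^T\log_2(1+p_1(t)h_1(x(t))+p_2(t)h_2(x(t)))dt$. *)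

From HB Require Import structures.
From mathcomp Require Import all_boot all_order all_algebra.
From mathcomp Require Import all_classical all_reals all_analysis.
Set Implicit Arguments. Unset Strict Implicit. Unset Printing Implicit Defensive.
Import Order.TTheory GRing.Theory Num.Theory.
Local Open Scope classical_set_scope.
Local Open Scope ring_scope.

Section Defs.
Variable R : realType.

Definition log2 (y : R) : R := ln y / ln 2.

Definition gain (beta0 H xk x : R) : R := beta0 / ((x - xk) ^+ 2 + H ^+ 2).

Definition gu1 (D : R) : R := - (D / 2).
Definition gu2 (D : R) : R := D / 2.

Definition avg_rate (T : R) (f : R -> R) : \bar R :=
  ((T^-1)%:E * \int[lebesgue_measure]_(t in `[0%R, T]%classic) (f t)%:E)%E.

Definition in_cap_region (D H beta0 T : R) (x p1 p2 : R -> R) (r1 r2 : R) : Prop :=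
  [/\ 0 <= r1, 0 <= r2,
      (r1%:E <= avg_rate T (fun t => log2 (1 + p1 t * gain beta0 H (gu1 D) (x t))))%E,
      (r2%:E <= avg_rate T (fun t => log2 (1 + p2 t * gain beta0 H (gu2 D) (x t))))%E &
      ((r1 + r2)%:E <= avg_rate T (fun t => log2 (1 + p1 t * gain beta0 H (gu1 D) (x t)
                                             + p2 t * gain beta0 H (gu2 D) (x t))))%E].

Definition P1_feasible (D H beta0 Pbar a1 a2 T V : R)
    (r r1 r2 : R) (x p1 p2 : R -> R) : Prop :=
  [/\ a1 * r <= r1 /\ a2 * r <= r2,
      in_cap_region D H beta0 T x p1 p2 r1 r2,
      (measurable_fun `[0%R, T]%classic p1 /\ measurable_fun `[0%R, T]%classic p2),
      (forall t, t \in `[0, T] -> [/\ 0 <= p1 t, 0 <= p2 t & p1 t + p2 t <= Pbar]) &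
      (* speed constraint |x'(t)| <= V, i.e. x is V-Lipschitz on [0,T] *)
      (forall s t, s \in `[0, T] -> t \in `[0, T] -> `|x s - x t| <= V * `|s - t|)].

Definition P1_optimal (D H beta0 Pbar a1 a2 T V : R)
    (r r1 r2 : R) (x p1 p2 : R -> R) : Prop :=
  P1_feasible D H beta0 Pbar a1 a2 T V r r1 r2 x p1 p2 /\
  forall r' r1' r2' x' p1' p2',
    P1_feasible D H beta0 Pbar a1 a2 T V r' r1' r2' x' p1' p2' -> r' <= r.

End Defs.

(* Suppose the UAV leaves the segment [-D/2, D/2] at some time t0.  By the
   speed constraint it then stays at distance at least e > 0 from the segment
   on a nondegenerate interval [a, b].  Clamping the trajectory onto the
   segment preserves the speed constraint and brings the UAV closer to both
   users at every time; on [a, b] it even multiplies both channel gains by at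
   least 1/th > 1.  Moving there the fraction 1 - th of each power towards the
   even split Pbar/2 keeps the power budget and, thanks to the better gains,
   raises every SNR on [a, b] by a fixed m > 0, even where the original power
   vanishes.  Hence both single-user rates and the sum rate grow by the same
   c > 0, so r + c is achievable, contradicting the optimality of r. *)

From HB Require Import structures.
From mathcomp Require Import all_boot all_order all_algebra.
From mathcomp Require Import all_classical all_reals all_analysis.
From mathcomp Require Import lra measurable_realfun.
Import Order.TTheory GRing.Theory Num.Theory.
Import numFieldNormedType.Exports.
Local Open Scope ring_scope.

Section clamp.
Context {R : realType}.
Implicit Types lo hi xk y z e : R.

Definition clamp lo hi y := Num.max lo (Num.min hi y).

Lemma clampP {lo hi} y : lo <= hi ->
  [\/ y <= lo /\ clamp lo hi y = lo, lo <= y <= hi /\ clamp lo hi y = y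
    | hi <= y /\ clamp lo hi y = hi].
Proof.
rewrite /clamp => lohi; have [yhi|hiy] := leP y hi; last first.
  by apply: Or33; split; [exact: ltW|exact/max_idPr].
have [loy|ylo] := leP lo y; first by apply: Or32; split => //; apply/andP.
by apply: Or31; split => //; exact: ltW.
Qed.

Lemma clamp_itv {lo hi} y : lo <= hi -> lo <= clamp lo hi y <= hi.
Proof. by move=> lohi; case: (clampP y lohi) => -[+ ->]; lra. Qed.

Lemma clamp_id lo hi y : lo <= y <= hi -> clamp lo hi y = y.
Proof.
move=> yin; have lohi : lo <= hi by lra.
by case: (clampP y lohi) => -[+ ->] //; lra.
Qed.

Lemma clamp_lipschitz {lo hi} y z : lo <= hi ->
  `|clamp lo hi y - clamp lo hi z| <= `|y - z|.
Proof.
move=> lohi; have := ler_norm (y - z); have := ler_norm (z - y).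
rewrite distrC ler_norml.
by case: (clampP y lohi) => -[? ->]; case: (clampP z lohi) => -[? ->]; lra.
Qed.

Lemma sqr_clamp_subr_le {lo hi xk} y : lo <= xk <= hi ->
  (clamp lo hi y - xk) ^+ 2 <= (y - xk) ^+ 2.
Proof.
move=> xkin; have lohi : lo <= hi by lra.
by case: (clampP y lohi) => -[? ->]; nra.
Qed.

Lemma sqr_clamp_subr_far {lo hi e xk} y : 0 <= e -> lo <= xk <= hi ->
  y <= lo - e \/ hi + e <= y -> (clamp lo hi y - xk) ^+ 2 + e ^+ 2 <= (y - xk) ^+ 2.
Proof.
move=> e0 xkin yfar; have lohi : lo <= hi by lra.
by case: (clampP y lohi) => -[? ->]; case: yfar => ?; nra.
Qed.

Lemma sqr_clamp_subr_width {lo hi xk} y : lo <= xk <= hi ->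
  (clamp lo hi y - xk) ^+ 2 <= (hi - lo) ^+ 2.
Proof.
move=> xkin; have lohi : lo <= hi by lra.
by have := clamp_itv y lohi; nra.
Qed.

End clamp.

Lemma lipschitz_continuous {R : realType} (k : R) (f : R -> R) : 0 <= k ->
  (forall s t, `|f s - f t| <= k * `|s - t|) -> continuous f.
Proof.
move=> k0 fk t; apply/cvgrPdist_le => e e0; near=> s.
apply: le_trans (fk t s) _.
have : `|t - s| <= e / (k + 1).
  near: s; apply: (cvgrPdist_le _ _).1; first exact: cvg_id.
  by rewrite divr_gt0 // ltr_wpDl.
move=> /(ler_wpM2l k0) /le_trans; apply.
rewrite mulrA ler_pdivrMr ?ltr_wpDl //; nra.
Unshelve. all: by end_near.
Qed.

Lemma lipschitz_measurable_itv {R : realType} {k a b : R} {f : R -> R} :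
  0 <= k -> a <= b ->
  (forall s t, s \in `[a, b] -> t \in `[a, b] -> `|f s - f t| <= k * `|s - t|) ->
  measurable_fun `[a, b] f.
Proof.
move=> k0 ab fk.
have ext_cont : continuous (f \o clamp a b).
  apply: (@lipschitz_continuous _ k _ k0) => s t /=.
  apply: le_trans (fk _ _ _ _) _; rewrite ?in_itv ?clamp_itv //.
  by rewrite ler_wpM2l // clamp_lipschitz.
apply: (eq_measurable_fun (f \o clamp a b)).
  by move=> t; rewrite inE /= => tab; rewrite /= clamp_id.
by apply: measurable_funTS; exact: continuous_measurable_fun.
Qed.

Section gain.
Context {R : realType}.
Variables beta0 H : R.
Hypotheses (hb : 0 < beta0) (hH : 0 < H).
Implicit Types xk y z K e : R.

Lemma gain_den_gt0 xk y : 0 < (y - xk) ^+ 2 + H ^+ 2.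
Proof. by rewrite ltr_wpDl ?sqr_ge0 ?exprn_gt0. Qed.

Lemma gain_gt0 xk y : 0 < gain beta0 H xk y.
Proof. by rewrite divr_gt0 ?gain_den_gt0. Qed.

Lemma gain_le_max xk y : gain beta0 H xk y <= beta0 / H ^+ 2.
Proof. by rewrite ler_pM2l // lef_pV2 ?posrE ?gain_den_gt0 ?exprn_gt0 ?lerDr ?sqr_ge0. Qed.

Lemma gain_ge xk y K : (y - xk) ^+ 2 <= K -> beta0 / (K + H ^+ 2) <= gain beta0 H xk y.
Proof.
move=> yK; have K0 : 0 < K + H ^+ 2.
  by apply: lt_le_trans (gain_den_gt0 xk y) _; rewrite lerD2r.
by rewrite ler_pM2l // lef_pV2 ?posrE ?gain_den_gt0 // lerD2r.
Qed.

Lemma gain_le xk y z : (z - xk) ^+ 2 <= (y - xk) ^+ 2 ->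
  gain beta0 H xk y <= gain beta0 H xk z.
Proof. by move=> zy; rewrite ler_pM2l // lef_pV2 ?posrE ?gain_den_gt0 // lerD2r. Qed.

Lemma gain_contract xk y z K e : (z - xk) ^+ 2 <= K ->
  (z - xk) ^+ 2 + e ^+ 2 <= (y - xk) ^+ 2 ->
  gain beta0 H xk y <= (K + H ^+ 2) / (K + H ^+ 2 + e ^+ 2) * gain beta0 H xk z.
Proof.
move=> zK yz; rewrite /gain.
have Az0 := gain_den_gt0 xk z; have Ay0 := gain_den_gt0 xk y.
have e20 := sqr_ge0 e.
have K0 : 0 < K + H ^+ 2 by lra.
rewrite mulf_div ler_pdivlMr ?mulr_gt0 //; last lra.
rewrite mulrAC ler_pdivrMr // [_ * beta0]mulrC -mulrA ler_pM2l //; nra.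
Qed.

End gain.

Lemma ler_mix_power {R : realDomainType} (p g g' th P G : R) :
  0 <= p -> g <= th * g' -> G <= g' -> 0 <= th <= 1 -> 0 <= P ->
  p * g + (1 - th) * P * G <= (th * p + (1 - th) * P) * g'.
Proof.
move=> p0 gg' Gg' th01 P0.
have : 0 <= (1 - th) * P by apply: mulr_ge0; lra.
have : p * g <= p * (th * g') by exact: ler_wpM2l.
nra.
Qed.

Section replace_on.
Context {R : realType}.
Implicit Types (A : set R) (f g : R -> R).

Definition replace_on A f g t := f t + \1_A t * (g t - f t).

Lemma replace_onE A f g t : replace_on A f g t = if t \in A then g t else f t.
Proof.
by rewrite /replace_on indicE; case: (t \in A); rewrite ?mul1r ?mul0r ?addr0 // addrC subrK.
Qed.

Lemma measurable_replace_on (D A : set R) f g : measurable A ->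
  measurable_fun D f -> measurable_fun D g -> measurable_fun D (replace_on A f g).
Proof.
move=> mA mf mg; apply: measurable_funD => //; apply: measurable_funM.
  exact: measurable_indic.
exact: measurable_funB.
Qed.

End replace_on.

Section log2.
Context {R : realType}.
Implicit Types y z : R.

Lemma ln2_gt0 : 0 < ln (2 : R).
Proof. by rewrite ln_gt0 // ltr1n. Qed.

Lemma log2_ge0 y : 1 <= y -> 0 <= log2 y.
Proof. by move=> y1; rewrite divr_ge0 ?ln_ge0 // ler1n. Qed.

Lemma log2_gt0 y : 1 < y -> 0 < log2 y.
Proof. by move=> y1; rewrite divr_gt0 ?ln_gt0 // ltr1n. Qed.

Lemma ler_log2 : {in Num.pos &, {mono @log2 R : y z / y <= z}}.
Proof. by move=> y z y0 z0; rewrite ler_pM2r ?invr_gt0 ?ln2_gt0 // ler_ln. Qed.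

Lemma log2M y z : 0 < y -> 0 < z -> log2 (y * z) = log2 y + log2 z.
Proof. by move=> y0 z0; rewrite /log2 lnM ?posrE // mulrDl. Qed.

Lemma measurable_log2 : measurable_fun [set: R] (@log2 R).
Proof. by apply: measurable_funM => //; exact: measurable_ln. Qed.

Lemma log2D_ge {u m M : R} : 0 < u -> u <= M -> 0 <= m ->
  log2 u + log2 (1 + m / M) <= log2 (u + m).
Proof.
move=> u0 uM m0; have M0 : 0 < M by exact: lt_le_trans uM.
have mM0 : 0 <= m / M by rewrite divr_ge0 // ltW.
have Mm0 : 0 < 1 + m / M by lra.
rewrite -log2M // ler_log2 ?posrE ?mulr_gt0 //; last lra.
by rewrite mulrDr mulr1 lerD2l mulrA ler_pdivrMr // mulrC ler_wpM2l.
Qed.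

End log2.

Lemma integral_indic_subitv {R : realType} {T a b k : R} :
  0 <= a -> a < b -> b <= T -> 0 <= k ->
  (\int[lebesgue_measure]_(t in `[0%R, T]%classic) (k * \1_(`[a, b]%classic) t)%:E
    = ((b - a) * k)%:E)%E.
Proof.
move=> a0 ab bT k0; under eq_integral do rewrite EFinM.
rewrite ge0_integralZl_EFin //; last by apply/measurable_EFinP; exact: measurable_indic.
rewrite integral_indic // setIidl; last by apply: subset_itv; rewrite bnd_simp.
by rewrite [X in (_ * X)%E]lebesgue_measure_itv /= lte_fin ab -EFinD -EFinM mulrC.
Qed.

Lemma avg_rate_log2_gain {R : realType} (T a b M m : R) (w w' : R -> R) :
  0 <= a -> a < b -> b <= T -> 0 < m ->
  measurable_fun `[0%R, T]%classic w -> measurable_fun `[0%R, T]%classic w' ->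
  (forall t, t \in `[0, T] -> [/\ 1 <= w t, w t <= M & w t <= w' t]) ->
  (forall t, t \in `[a, b] -> w t + m <= w' t) ->
  (avg_rate T (fun t => log2 (w t)) + ((b - a) * log2 (1 + m / M) / T)%:E
     <= avg_rate T (fun t => log2 (w' t)))%E.
Proof.
move=> a0 ab bT m0 mw mw' ww' wm.
have T0 : 0 < T by lra.
have aT : a \in `[0, T] by rewrite in_itv /=; apply/andP; lra.
have M0 : 0 < M by have [? ? _] := ww' a aT; lra.
have k0 : 0 <= log2 (1 + m / M) by rewrite log2_ge0 // lerDl divr_ge0 ?ltW.
set k := log2 (1 + m / M).
have mT : measurable (`[0, T]%classic : set R) by exact: measurable_itv.
have mlog2 f : measurable_fun `[0%R, T]%classic f ->
    measurable_fun `[0%R, T]%classic (fun t => log2 (f t)).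
  by move=> mf; exact: measurableT_comp measurable_log2 mf.
have log2w0 t : `[0, T]%classic t -> 0 <= log2 (w t).
  by move=> /ww' [w1 _ _]; rewrite log2_ge0.
have pointwise t : `[0, T]%classic t ->
    (log2 (w t) + k * \1_(`[a, b]%classic) t <= log2 (w' t))%R.
  move=> /ww' [w1 wM ww't]; rewrite indicE.
  have w0 : 0 < w t by lra.
  have w'0 : 0 < w' t by lra.
  case: (boolP (t \in _)) => [tab|_]; last by rewrite mulr0 addr0 ler_log2 ?posrE.
  have wm0 : 0 < w t + m by lra.
  rewrite mulr1; apply: le_trans (log2D_ge w0 wM (ltW m0)) _.
  by rewrite ler_log2 ?posrE // wm //; exact: set_mem.
have mlog2w : measurable_fun `[0%R, T]%classic (fun t => (log2 (w t))%:E).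
  by apply/measurable_EFinP; exact: mlog2.
have mlog2w' : measurable_fun `[0%R, T]%classic (fun t => (log2 (w' t))%:E).
  by apply/measurable_EFinP; exact: mlog2.
have mkab : measurable_fun `[0%R, T]%classic (fun t => (k * \1_(`[a, b]%classic) t)%:E).
  by apply/measurable_EFinP; apply: measurable_funM => //; exact: measurable_indic.
have kab0 t : 0 <= k * \1_(`[a, b]%classic) t by rewrite mulr_ge0 // indicE ler0n.
have integral_gain : (\int[lebesgue_measure]_(t in `[0%R, T]%classic) (log2 (w t))%:E
    + \int[lebesgue_measure]_(t in `[0%R, T]%classic) (k * \1_(`[a, b]%classic) t)%:E
    <= \int[lebesgue_measure]_(t in `[0%R, T]%classic) (log2 (w' t))%:E)%E.
  rewrite -ge0_integralD //; last by move=> t /log2w0; rewrite lee_fin.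
  apply: ge0_le_integral => //; last exact: emeasurable_funD.
  by move=> t tT; rewrite -EFinD lee_fin addr_ge0 ?log2w0.
rewrite integral_indic_subitv // in integral_gain.
rewrite /avg_rate [(b - a) * k / T]mulrC EFinM -ge0_muleDr ?integral_ge0 ?lee_fin //.
- by apply: lee_wpmul2l => //; rewrite lee_fin invr_ge0 ltW.
- by rewrite mulr_ge0 // subr_ge0 ltW.
Qed.

Lemma lipschitz_away_itv {R : realType} {T k d t0 : R} {f : R -> R} :
  0 < T -> 0 <= k ->
  (forall s t, s \in `[0, T] -> t \in `[0, T] -> `|f s - f t| <= k * `|s - t|) ->
  t0 \in `[0, T] -> d < `|f t0| ->
  exists a b e, [/\ 0 <= a, a < b, b <= T, 0 < e &
    forall t, t \in `[a, b] -> d + e <= `|f t|].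
Proof.
move=> T0 k0 fk t0T ft0.
pose e := (`|f t0| - d) / 2; pose dl := e / (k + 1).
have e0 : 0 < e by rewrite divr_gt0 // subr_gt0.
have dl0 : 0 < dl by rewrite divr_gt0 // ltr_wpDl.
have kdl : k * dl <= e by rewrite mulrA ler_pdivrMr ?ltr_wpDl //; nra.
move: t0T; rewrite in_itv /= => /andP [t00 t0T'].
exists (Num.max 0 (t0 - dl)), (Num.min T (t0 + dl)), e; split => //.
- by rewrite le_max lexx.
- by rewrite gt_max !lt_min; apply/andP; split; apply/andP; split; lra.
- by rewrite ge_min lexx.
move=> t; rewrite in_itv /= ge_max le_min => /andP [/andP [t_0 tl] /andP [tT tr]].
have tT' : t \in `[0, T] by rewrite in_itv /= t_0 tT.
have t0T : t0 \in `[0, T] by rewrite in_itv /= t00 t0T'.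
have : `|f t - f t0| <= e.
  apply: le_trans (fk _ _ tT' t0T) _; apply: le_trans kdl.
  by rewrite ler_wpM2l // ler_norml; apply/andP; lra.
have := ler_normD (f t) (f t0 - f t); rewrite addrCA subrr addr0 distrC.
rewrite /e; lra.
Qed.

Lemma continuous_gain {R : realType} (beta0 H xk : R) : 0 < H ->
  continuous (gain beta0 H xk).
Proof.
move=> hH y; apply: cvgM; first exact: cvg_cst.
apply: cvgV; first by rewrite gt_eqF // ltr_wpDl ?sqr_ge0 ?exprn_gt0.
apply: cvgD; last exact: cvg_cst.
under eq_fun do rewrite expr2.
by apply: cvgM; apply: cvgB; (exact: cvg_id || exact: cvg_cst).
Qed.

Section clamped_trajectory.
Context {R : realType}.
Context {D H beta0 Pbar a1 a2 T V : R}.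
Hypotheses (hD : 0 < D) (hH : 0 < H) (hb : 0 < beta0) (hP : 0 < Pbar).
Hypotheses (ha1 : 0 <= a1) (ha2 : 0 <= a2) (ha : a1 + a2 = 1) (hV : 0 <= V).
Context {r r1 r2 : R} {x p1 p2 : R -> R}.
Hypothesis feas : P1_feasible D H beta0 Pbar a1 a2 T V r r1 r2 x p1 p2.
Context {a b e : R}.
Hypotheses (a0 : 0 <= a) (ab : a < b) (bT : b <= T) (e0 : 0 < e).
Hypothesis x_far : forall t, t \in `[a, b] -> D / 2 + e <= `|x t|.

Let T0 : 0 < T. Proof. exact: le_lt_trans a0 (lt_le_trans ab bT). Qed.

Let x_lip s t : s \in `[0, T] -> t \in `[0, T] -> `|x s - x t| <= V * `|s - t|.
Proof. by case: feas => _ _ _ _ /(_ s t). Qed.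

Let p_ok {t} : t \in `[0, T] -> [/\ 0 <= p1 t, 0 <= p2 t & p1 t + p2 t <= Pbar].
Proof. by case: feas => _ _ _ /(_ t). Qed.

Let d := D / 2.
Let xc t := clamp (- d) d (x t).
(* [K] bounds the squared distance between two points of the segment. *)
Let K := (d + d) ^+ 2.
Let th := (K + H ^+ 2) / (K + H ^+ 2 + e ^+ 2).
Let pc p := replace_on `[a, b]%classic p (fun t => th * p t + (1 - th) * (Pbar / 2)).
Let m := (1 - th) * (Pbar / 2) * (beta0 / (K + H ^+ 2)).
Let M := 1 + Pbar * (beta0 / H ^+ 2).
Let c := (b - a) * log2 (1 + m / M) / T.

Let d_gt0 : 0 < d. Proof. by rewrite divr_gt0. Qed.

Let Nd_le_d : - d <= d. Proof. by rewrite (@le_trans _ _ 0) // ?oppr_le0 ltW. Qed.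

Let KH_gt0 : 0 < K + H ^+ 2.
Proof. by rewrite /K ltr_wpDl ?sqr_ge0 ?exprn_gt0. Qed.

Let th_itv : 0 < th < 1.
Proof.
have e2 : 0 < e ^+ 2 by rewrite exprn_gt0.
have KHe : 0 < K + H ^+ 2 + e ^+ 2 by rewrite addr_gt0.
by rewrite /th divr_gt0 // ltr_pdivrMr // mul1r ltrDl.
Qed.

Let m_gt0 : 0 < m.
Proof.
have /andP [_ th1] := th_itv.
by rewrite /m !mulr_gt0 ?divr_gt0 ?invr_gt0 ?subr_gt0 ?ltr0n.
Qed.

Let c_gt0 : 0 < c.
Proof.
have M0 : 0 < M by rewrite /M ltr_wpDr // mulr_ge0 ?divr_ge0 ?ltW ?exprn_gt0.
have l0 : 0 < log2 (1 + m / M) by rewrite log2_gt0 // ltrDl divr_gt0.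
by rewrite /c divr_gt0 // mulr_gt0 // subr_gt0.
Qed.

Let snr_clamp_gain {xk p t} : - d <= xk <= d -> 0 <= p t -> t \in `[a, b] ->
  p t * gain beta0 H xk (x t) + m <= pc p t * gain beta0 H xk (xc t).
Proof.
move=> xkd p0 tab; rewrite /pc replace_onE ifT; last exact: mem_set.
have /andP [th0 th1] := th_itv.
have xcK : (xc t - xk) ^+ 2 <= K by have := sqr_clamp_subr_width (x t) xkd; rewrite opprK.
apply: ler_mix_power => //; last 2 first.
- by apply/andP; split; exact: ltW.
- by rewrite divr_ge0 ?ltW.
- apply: gain_contract => //; apply: sqr_clamp_subr_far => //; first exact: ltW.
  by have := x_far _ tab; rewrite /d ler_normr => /orP [] ?; [right|left]; lra.
- exact: gain_ge.
Qed.

Let snr_clamp_le {xk p} t : - d <= xk <= d -> 0 <= p t ->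
  p t * gain beta0 H xk (x t) <= pc p t * gain beta0 H xk (xc t).
Proof.
move=> xkd p0; case: (boolP (t \in `[a, b]%classic)) => tab.
  by apply: le_trans (snr_clamp_gain xkd p0 (set_mem tab)); rewrite lerDl ltW.
rewrite /pc replace_onE (negbTE tab) ler_wpM2l // gain_le //.
exact: sqr_clamp_subr_le.
Qed.

Let snr_le_max xk {p : R -> R} {t} : 0 <= p t ->
  p t * gain beta0 H xk (x t) <= p t * (beta0 / H ^+ 2).
Proof. by move=> p0; rewrite ler_wpM2l // gain_le_max. Qed.

Let xc_lip s t : s \in `[0, T] -> t \in `[0, T] -> `|xc s - xc t| <= V * `|s - t|.
Proof.
move=> sT tT; apply: le_trans _ (x_lip _ _ sT tT); exact: clamp_lipschitz.
Qed.

Let mx : measurable_fun `[0%R, T]%classic x.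
Proof. exact: lipschitz_measurable_itv hV (ltW T0) x_lip. Qed.

Let mxc : measurable_fun `[0%R, T]%classic xc.
Proof.
apply: measurableT_comp mx; apply: continuous_measurable_fun.
by apply: (@lipschitz_continuous _ 1) => // y z; rewrite mul1r clamp_lipschitz.
Qed.

Let mpc p : measurable_fun `[0%R, T]%classic p -> measurable_fun `[0%R, T]%classic (pc p).
Proof.
move=> mp; apply: measurable_replace_on => //.
by apply: measurable_funD => //; exact: measurable_funM.
Qed.

Let msnr xk (y p : R -> R) : measurable_fun `[0%R, T]%classic y ->
  measurable_fun `[0%R, T]%classic p ->
  measurable_fun `[0%R, T]%classic (fun t => p t * gain beta0 H xk (y t)).
Proof.
move=> my mp; apply: measurable_funM => //; apply: measurableT_comp my.
by apply: continuous_measurable_fun; exact: continuous_gain.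
Qed.

Let pc_ok t : t \in `[0, T] -> [/\ 0 <= pc p1 t, 0 <= pc p2 t & pc p1 t + pc p2 t <= Pbar].
Proof.
move=> tT; have [p10 p20 pP] := p_ok tT.
rewrite /pc !replace_onE; case: ifP => _ //.
have /andP [th0 th1] := th_itv.
have := mulr_ge0 (ltW th0) p10; have := mulr_ge0 (ltW th0) p20.
have := ler_wpM2l (ltW th0) pP; have := hP.
by move=> *; split; nra.
Qed.

Let itv_ab_sub {t} : t \in `[a, b] -> t \in `[0, T].
Proof. by apply: subset_itv; rewrite bnd_simp. Qed.

Let gu1_itv : - d <= gu1 D <= d. Proof. by rewrite /gu1 lexx Nd_le_d. Qed.

Let gu2_itv : - d <= gu2 D <= d. Proof. by rewrite /gu2 lexx Nd_le_d. Qed.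

Let p1_le t : t \in `[0, T] -> 0 <= p1 t <= Pbar.
Proof. by case/p_ok => p10 p20 pP; rewrite p10 /=; have := pP; have := p20; lra. Qed.

Let p2_le t : t \in `[0, T] -> 0 <= p2 t <= Pbar.
Proof. by case/p_ok => p10 p20 pP; rewrite p20 /=; have := pP; have := p10; lra. Qed.

Let snr_ge0 xk {p : R -> R} {t} : 0 <= p t -> 0 <= p t * gain beta0 H xk (x t).
Proof. by move=> p0; rewrite mulr_ge0 // ltW // gain_gt0. Qed.

Let avg_rate_single_gain {xk} {p : R -> R} : - d <= xk <= d ->
  measurable_fun `[0%R, T]%classic p ->
  (forall t, t \in `[0, T] -> 0 <= p t <= Pbar) ->
  (avg_rate T (fun t => log2 (1 + p t * gain beta0 H xk (x t))) + c%:E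
    <= avg_rate T (fun t => log2 (1 + pc p t * gain beta0 H xk (xc t))))%E.
Proof.
move=> xkd mp pP; apply: avg_rate_log2_gain => //.
- by apply: measurable_funD => //; exact: msnr.
- by apply: measurable_funD => //; apply: msnr => //; exact: mpc.
- move=> t /pP /andP [p0 pPbar]; rewrite /M.
  have := snr_clamp_le t xkd p0; have := snr_ge0 xk p0; have := snr_le_max xk p0.
  have := ler_wpM2r (divr_ge0 (ltW hb) (sqr_ge0 H)) pPbar.
  by move=> *; split; lra.
- move=> t tab; have /andP [p0 _] := pP t (itv_ab_sub tab).
  by rewrite -addrA lerD2l; exact: snr_clamp_gain.
Qed.

Let avg_rate_sum_gain :
  (avg_rate T (fun t => log2 (1 + p1 t * gain beta0 H (gu1 D) (x t)
                              + p2 t * gain beta0 H (gu2 D) (x t))) + c%:E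
   <= avg_rate T (fun t => log2 (1 + pc p1 t * gain beta0 H (gu1 D) (xc t)
                                 + pc p2 t * gain beta0 H (gu2 D) (xc t))))%E.
Proof.
have [mp1 mp2] : measurable_fun `[0%R, T]%classic p1 /\ measurable_fun `[0%R, T]%classic p2.
  by case: feas.
apply: avg_rate_log2_gain => //.
- by apply: measurable_funD; [apply: measurable_funD|]; rewrite //; exact: msnr.
- by apply: measurable_funD; [apply: measurable_funD|]; rewrite //;
    apply: msnr => //; exact: mpc.
- move=> t tT; have [p10 p20 pP] := p_ok tT; rewrite /M.
  have := snr_clamp_le t gu1_itv p10; have := snr_clamp_le t gu2_itv p20.
  have := snr_ge0 (gu1 D) p10; have := snr_ge0 (gu2 D) p20.
  have := snr_le_max (gu1 D) p10; have := snr_le_max (gu2 D) p20.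
  have := ler_wpM2r (divr_ge0 (ltW hb) (sqr_ge0 H)) pP; rewrite mulrDl.
  by move=> *; split; lra.
- move=> t tab; have [p10 p20 _] := p_ok (itv_ab_sub tab).
  have := snr_clamp_gain gu1_itv p10 tab; have := snr_clamp_le t gu2_itv p20.
  by move=> *; lra.
Qed.

Let rate_shift (A A' : \bar R) u v : (u%:E <= A)%E -> (A + c%:E <= A')%E -> v <= c ->
  ((u + v)%:E <= A')%E.
Proof. by move=> uA AA' vc; apply: le_trans AA'; rewrite EFinD leeD // lee_fin. Qed.

Lemma P1_feasible_improvement :
  exists2 c, 0 < c & exists r1' r2' x' p1' p2',
    P1_feasible D H beta0 Pbar a1 a2 T V (r + c) r1' r2' x' p1' p2'.
Proof.
have [[a1r a2r] [r10 r20 rate1 rate2 rate12] [mp1 mp2] _ _] := feas.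
exists c => //; exists (r1 + a1 * c), (r2 + a2 * c), xc, (pc p1), (pc p2).
have c0 := ltW c_gt0.
have a1c : a1 * c <= c by rewrite ler_piMl // -ha lerDl.
have a2c : a2 * c <= c by rewrite ler_piMl // -ha lerDr.
split => //.
- by rewrite !mulrDr !lerD2r.
- split.
  + exact: addr_ge0 r10 (mulr_ge0 ha1 c0).
  + exact: addr_ge0 r20 (mulr_ge0 ha2 c0).
  + exact: rate_shift rate1 (avg_rate_single_gain gu1_itv mp1 p1_le) a1c.
  + exact: rate_shift rate2 (avg_rate_single_gain gu2_itv mp2 p2_le) a2c.
  + rewrite addrACA -mulrDl ha mul1r.
    exact: rate_shift rate12 avg_rate_sum_gain (lexx c).
- by split; exact: mpc.
Qed.

End clamped_trajectory.

Theorem lemma2 (R : realType) (D H beta0 Pbar a1 a2 T V : R)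
  (hD : 0 < D) (hH : 0 < H) (hb : 0 < beta0) (hP : 0 < Pbar)
  (ha1 : 0 <= a1) (ha2 : 0 <= a2) (ha : a1 + a2 = 1)
  (hT : 0 < T) (hV : 0 <= V)
  (r r1 r2 : R) (x p1 p2 : R -> R) :
  P1_optimal D H beta0 Pbar a1 a2 T V r r1 r2 x p1 p2 ->
  forall t, t \in `[0, T] -> - (D / 2) <= x t <= D / 2.
Proof.
move=> [feas opt] t0 t0T; rewrite -ler_norml leNgt; apply/negP => x_out.
have [_ _ _ _ x_lip] := feas.
have [a [b [e [a0 ab bT e0 x_far]]]] := lipschitz_away_itv hT hV x_lip t0T x_out.
have [c c0 [r1' [r2' [x' [p1' [p2' feas']]]]]] :=
  P1_feasible_improvement hD hH hb hP ha1 ha2 ha hV feas a0 ab bT e0 x_far.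
by have := opt _ _ _ _ _ _ feas'; rewrite gerDl leNgt c0.
Qed.
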